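(* Let $r\ge5$ and let $W_{r+1}=C_r\vee K_1$ be the wheel. Then $\operatorname{ZIR}(W_{r+1})=r-\gamma(C_r)=r-\lceil r/3\rceil$ and $\operatorname{zir}(W_{r+1})=\operatorname{Z}(W_{r+1})=\overline{\operatorname{Z}}(W_{r+1})=3$.
   Context: $\vee$ is the join; $\gamma$ is the domination number. Zero forcing: a blue vertex $u$ changes a white vertex $w$ to blue if $w$ is the only white neighbor of $u$; $B$ is a zero forcing set if from blue set $B$ eventually all vertices are blue; $\operatorname{Z}(G)$ is the minimum size of a zero forcing set and $\overline{\operatorname{Z}}(G)$ the maximum size of an inclusion-minimal zero forcing set. A nonempty $F\subseteq V(G)$ is a fort if every $v\notin F$ has $|N(v)\cap F|\ne1$. A private fort of $x\in S$ relative to $S$ is a fort $F$ with $S\cap F=\{x\}$; $S$ is a ZIr-set if every element of $S$ has a private fort. $\operatorname{zir}(G)$ / $\operatorname{ZIR}(G)$ are the minimum / maximum cardinality of an inclusion-maximal ZIr-set. *)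

From mathcomp Require Import all_boot.
Set Implicit Arguments. Unset Strict Implicit. Unset Printing Implicit Defensive.

Section Graph.
Variables (V : finType) (adj : rel V).

Definition nbhd (v : V) : {set V} := [set u | adj v u].

Definition force_step (B : {set V}) : {set V} :=
  B :|: [set w | [exists u in B, (w \notin B) && (nbhd u :\: B == [set w])]].

(* the final coloring: after #|V| rounds nothing changes any more *)
Definition zf_closure (B : {set V}) : {set V} := iter #|V| force_step B.

Definition zero_forcing_set (B : {set V}) : bool := zf_closure B == setT.

(* Z(G): minimum size of a zero forcing set (V itself is one) *)
Definition Zf : nat :=
  \big[minn/#|V|]_(B : {set V} | zero_forcing_set B) #|B|.

Definition Zbar : nat :=
  \max_(B : {set V} | minset zero_forcing_set B) #|B|.

Definition fort (F : {set V}) : bool :=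
  (F != set0) && [forall v, (v \notin F) ==> (#|nbhd v :&: F| != 1)].

Definition private_fort (S : {set V}) (x : V) (F : {set V}) : bool :=
  fort F && (S :&: F == [set x]).

Definition ZIr_set (S : {set V}) : bool :=
  [forall x in S, exists F : {set V}, private_fort S x F].

(* zir / ZIR : min / max cardinality of an inclusion-maximal ZIr-set
   (the empty set is a ZIr-set, so maximal ones exist) *)
Definition zir : nat :=
  \big[minn/#|V|]_(S : {set V} | maxset ZIr_set S) #|S|.

Definition ZIR : nat :=
  \max_(S : {set V} | maxset ZIr_set S) #|S|.

Definition dominating (D : {set V}) : bool :=
  [forall v, (v \in D) || [exists u in D, adj u v]].

Definition domination_number : nat :=
  \big[minn/#|V|]_(D : {set V} | dominating D) #|D|.

End Graph.

Definition cycle_adj (r : nat) : rel 'I_r :=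
  fun i j => (val j == i.+1 %% r) || (val i == j.+1 %% r).

(* wheel W_{r+1} = C_r \vee K_1 on option 'I_r, the hub being None *)
Definition wheel_adj (r : nat) : rel (option 'I_r) :=
  fun x y => match x, y with
             | Some i, Some j => cycle_adj i j
             | Some _, None | None, Some _ => true
             | None, None => false
             end.

(* A set is zero forcing iff it meets every fort.  In the wheel, a fort avoiding the
   hub contains one of any two consecutive rim vertices, and a fort containing the hub
   contains a rim neighbour of each rim vertex it misses.  So every zero forcing set
   contains either the hub and two consecutive rim vertices or three consecutive rim
   vertices, and both kinds of triples are zero forcing: Z = Zbar = 3.
   Let S be a ZIr-set.  If S contains the hub and at least four vertices, the private
   forts of its rim vertices avoid the hub, which forces the rim part of S to be
   independent, so |S| <= r/2 + 1.  If S avoids the hub, either its rim part contains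
   three consecutive vertices (then |S| <= 3), or its complement dominates C_r and
   |S| <= r - gamma(C_r).  Conversely the rim complement of a dominating set D is a
   ZIr-set, i having the private fort {hub} + D + {i}.  Finally the hub with two
   consecutive rim vertices is a maximal ZIr-set, and every set of at most two
   vertices lies in a ZIr-set {hub, a, b}: zir = 3. *)

From mathcomp Require Import all_boot.
From mathcomp Require Import zify.
Set Implicit Arguments. Unset Strict Implicit. Unset Printing Implicit Defensive.

Section BigMinMax.
Variables (T : finType) (P : pred T) (F : T -> nat).

Lemma geq_bigmin_cond (d : nat) (x : T) : P x -> \big[minn/d]_(y | P y) F y <= F x.
Proof.
move=> Px; have : x \in index_enum T by rewrite mem_index_enum.
elim: (index_enum T) => // y s IHs; rewrite inE big_cons => /orP[/eqP<-|xs].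
  by rewrite Px geq_minl.
by case: (P y); rewrite ?geq_min IHs ?orbT.
Qed.

Lemma bigmin_eq (d m : nat) (x : T) :
  P x -> F x <= m -> m <= d -> (forall y, P y -> m <= F y) ->
  \big[minn/d]_(y | P y) F y = m.
Proof.
move=> Px Fxm md lbF; apply/eqP; rewrite eqn_leq (leq_trans (geq_bigmin_cond d Px)) //.
by elim/big_rec: _ => // y n Py mn; rewrite leq_min lbF.
Qed.

Lemma bigmax_eq (m : nat) (x : T) :
  P x -> m <= F x -> (forall y, P y -> F y <= m) -> \max_(y | P y) F y = m.
Proof.
move=> Px mFx ubF; apply/eqP; rewrite eqn_leq; apply/andP; split.
  exact/bigmax_leqP.
exact: leq_trans mFx (leq_bigmax_cond _ Px).
Qed.

End BigMinMax.

Section FinSet.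
Variable T : finType.

Lemma cards3 (x y z : T) : x != y -> x != z -> y != z -> #|[set x; y; z]| = 3.
Proof.
by move=> xy xz yz; rewrite -setUA cardsU1 cards2 !inE negb_or xy xz yz.
Qed.

Lemma card_neq1 (A : {set T}) x y : x \in A -> y \in A -> x != y -> #|A| != 1.
Proof. by move=> xA yA xy; rewrite neq_ltn; apply/orP; right; apply/card_gt1P; exists x, y. Qed.

Lemma subset_pair (A : {set T}) :
  1 < #|T| -> #|A| <= 2 -> exists a b, a != b /\ A \subset [set a; b].
Proof.
case/card_gt1P=> x [y [_ _ xy]].
have other (a : T) : exists2 b, a != b & [set a] \subset [set a; b].
  case: (eqVneq a x) => [->|ax]; first by exists y; rewrite // sub1set !inE eqxx.
  by exists x; rewrite // sub1set !inE eqxx.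
case: {-1}#|A| (erefl #|A|) => [|[|[|//]]] cA _.
- by exists x, y; rewrite (cards0_eq cA) sub0set.
- by move/eqP/cards1P: cA => -[a ->]; have [b ab sub] := other a; exists a, b.
by move/eqP/cards2P: cA => -[a [b [ab ->]]]; exists a, b.
Qed.

End FinSet.

Section ZeroForcing.
Variables (V : finType) (adj : rel V).
Local Notation force := (force_step adj).

Lemma subset_force_step (B : {set V}) : B \subset force B.
Proof. exact: subsetUl. Qed.

Lemma subset_iter_force k (B : {set V}) : B \subset iter k force B.
Proof.
elim: k => [|k IHk] /=; first exact: subxx.
exact: subset_trans IHk (subset_force_step _).
Qed.

Lemma domination_number_le (D : {set V}) : dominating adj D -> domination_number adj <= #|D|.
Proof. exact: geq_bigmin_cond. Qed.

Lemma fort_other_nbr (F : {set V}) v w : fort adj F -> v \notin F ->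
  w \in nbhd adj v :&: F -> exists2 w', w' \in nbhd adj v :&: F & w' != w.
Proof.
case/andP=> _ /forallP/(_ v)/implyP fortF vF wNF.
have /set0Pn[w' ] : nbhd adj v :&: F :\ w != set0.
  apply: contra (fortF vF) => /eqP NFw; apply/cards1P; exists w; apply/eqP.
  by rewrite eqEsubset sub1set wNF andbT -setD_eq0 NFw.
by rewrite !inE => /andP[w'w w'NF]; exists w'; rewrite // !inE.
Qed.

Lemma zf_closureK (B : {set V}) : force (zf_closure adj B) = zf_closure adj B.
Proof.
pose iterF k := iter k force B.
suff /'exists_eqP[k /= e] : [exists k : 'I_#|V|.+1, iterF k == iterF k.+1].
  by rewrite /zf_closure -(subnK (leq_ord k)) iterD iter_fix.
apply: contraT => /existsPn /(_ (Ordinal _)) /= neq_iter.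
suff iter_big k : k <= #|V|.+1 -> k <= #|iterF k|.
  by have := iter_big _ (leqnn _); rewrite ltnNge max_card.
elim: k => [|k IHk] k_lt //=; apply: (leq_ltn_trans (IHk (ltnW k_lt))).
by rewrite proper_card // properEneq // subset_force_step neq_iter.
Qed.

(* A blue vertex outside a white fort never has a unique white neighbour in it. *)
Lemma force_step_disjoint (B F : {set V}) :
  fort adj F -> [disjoint B & F] -> [disjoint force B & F].
Proof.
case/andP=> _ /forallP fortF BF; rewrite -setI_eq0; apply/set0Pn=> -[w].
rewrite !inE => /andP[/orP[wB|/existsP[u /and3P[uB wB /eqP Nu]]] wF].
  by rewrite (disjointFr BF wB) in wF.
move: (fortF u); rewrite (disjointFr BF uB) /= => /negP; apply; apply/cards1P; exists w.
apply/eqP; rewrite eqEsubset sub1set !inE wF andbT -[nbhd _ _]setIT.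
have : w \in nbhd adj u :\: B by rewrite Nu set11.
rewrite !inE => /andP[_ ->]; rewrite andbT -Nu.
by apply/subsetP=> y; rewrite !inE => /andP[/andP[yN _] yF]; rewrite yN (disjointFl BF yF).
Qed.

Lemma fort_setC_zf_closure (B : {set V}) :
  zf_closure adj B != setT -> fort adj (~: zf_closure adj B).
Proof.
set C := zf_closure adj B => CT; apply/andP; split.
  by apply: contra CT => /eqP/(congr1 (@setC _)); rewrite setCK setC0 => ->.
apply/forallP=> v; rewrite inE negbK; apply/implyP=> vC.
apply/negP=> /cards1P[w Nw]; have : w \in nbhd adj v :&: ~: C by rewrite Nw set11.
rewrite !inE => /andP[_ wC]; have fixC : force C = C := zf_closureK B.
move: (wC); rewrite -{1}fixC !inE negb_or.
case/andP=> _ /existsP; apply; exists v; rewrite vC wC /=.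
by rewrite setDE Nw.
Qed.

Lemma zero_forcing_setP (B : {set V}) :
  reflect (forall F, fort adj F -> ~~ [disjoint B & F]) (zero_forcing_set adj B).
Proof.
apply: (iffP eqP) => [BT F fortF | meetB]; last first.
  apply/eqP; apply: contraT => CT; move: (meetB _ (fort_setC_zf_closure CT)).
  by rewrite disjoints_subset setCK subset_iter_force.
apply: contraTN (fortF) => BF; rewrite /fort negb_and; apply/orP; left.
have : [disjoint zf_closure adj B & F].
  by rewrite /zf_closure; elim: #|V| => //= k; apply: force_step_disjoint.
by rewrite BT disjoint_sym disjoints_subset setCT subset0 negbK.
Qed.

Lemma ZIr_setP (S : {set V}) :
  reflect (forall x, x \in S ->
             exists2 F, fort adj F & forall y, y \in S -> (y \in F) = (y == x))
          (ZIr_set adj S).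
Proof.
apply: (iffP forallP) => [privS x xS | privS x].
  move: (privS x); rewrite xS => /existsP[F /andP[fortF /eqP SF]].
  by exists F => // y yS; rewrite -in_set1 -SF inE yS.
apply/implyP=> xS; have [F fortF SF] := privS x xS.
apply/existsP; exists F; rewrite /private_fort fortF eqEsubset sub1set !inE xS SF //=.
by rewrite eqxx andbT; apply/subsetP=> y; rewrite !inE => /andP[yS]; rewrite SF.
Qed.

End ZeroForcing.

Section Cycle.
Variable r : nat.
Hypothesis r_gt2 : 2 < r.
Local Notation Cy := (@cycle_adj r).

Let r_gt0 : 0 < r. Proof. exact: ltn_trans r_gt2. Qed.

Lemma val_iter_ordS k (i : 'I_r) : val (iter k (@ordS r) i) = (i + k) %% r.
Proof.
elim: k => [|k IHk] /=; first by rewrite addn0 modn_small.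
by rewrite IHk -addn1 modnDml addn1 addnS.
Qed.

Lemma ordS_neq (i : 'I_r) : ordS i != i.
Proof.
rewrite -val_eqE /=; have := ltn_ord i; case: (ltngtP i.+1 r) => [ltSir|ltrS|eqSir] ltir.
- by rewrite modn_small //; lia.
- lia.
- by rewrite eqSir modnn; lia.
Qed.

Lemma ordSS_neq (i : 'I_r) : ordS (ordS i) != i.
Proof.
rewrite -val_eqE; have -> := val_iter_ordS 2 i; have := ltn_ord i => /= ltir.
case: (ltnP (i + 2) r) => [lt_i2r|le_ri2]; first by rewrite modn_small //; lia.
by rewrite -(subnK le_ri2) modnDr modn_small; lia.
Qed.

Lemma ord_pred_neq (i : 'I_r) : ord_pred i != i.
Proof. by rewrite -(inj_eq (@ordS_inj _)) ord_predK eq_sym ordS_neq. Qed.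

Lemma ordS_neq_pred (i : 'I_r) : ordS i != ord_pred i.
Proof. by rewrite -(inj_eq (@ordS_inj _)) ord_predK ordSS_neq. Qed.

Lemma cycle_adjE (i j : 'I_r) : Cy i j = (j == ordS i) || (j == ord_pred i).
Proof. by congr (_ || _); rewrite -(can2_eq (@ordSK _) (@ord_predK _)) eq_sym. Qed.

Lemma cycle_adj_sym (i j : 'I_r) : Cy i j = Cy j i.
Proof. by rewrite /cycle_adj orbC. Qed.

Lemma cycle_dominatingP (D : {set 'I_r}) :
  reflect (forall v, v \notin D -> (ordS v \in D) || (ord_pred v \in D))
          (dominating Cy D).
Proof.
apply: (iffP forallP) => [domD v vD | domD v].
  move: (domD v); rewrite (negbTE vD) /= => /existsP[u /andP[uD]].
  by rewrite cycle_adj_sym cycle_adjE => /orP[]/eqP <-; rewrite uD ?orbT.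
case: (boolP (v \in D)) => //= vD; apply/existsP.
by case/orP: (domD v vD) => [Sv|Pv]; [exists (ordS v) | exists (ord_pred v)];
  rewrite ?Sv ?Pv cycle_adj_sym cycle_adjE eqxx ?orbT.
Qed.

Definition cnbhd (v : 'I_r) : {set 'I_r} := [set ord_pred v; v; ordS v].

Lemma card_cnbhd v : #|cnbhd v| = 3.
Proof. by rewrite cards3 // ?ord_pred_neq 1?eq_sym ?ordS_neq_pred ?ordS_neq. Qed.

Lemma dominating_setC (T : {set 'I_r}) :
  (forall v, ~~ (cnbhd v \subset T)) -> dominating Cy (~: T).
Proof.
move=> notT; apply/cycle_dominatingP => v; rewrite !inE negbK -negb_and => vT.
by apply: contra (notT v) => /andP[ST PT]; apply/subsetP=> y; rewrite !inE -orbA => /or3P[]/eqP->.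
Qed.

Definition cycle_independent (I : {set 'I_r}) : bool := [forall i in I, ordS i \notin I].

Lemma cycle_independent1 i : cycle_independent [set i].
Proof. by apply/forall_inP=> j; rewrite !inE => /eqP->; rewrite ordS_neq. Qed.

Lemma card_cycle_independent (I : {set 'I_r}) : cycle_independent I -> 2 * #|I| <= r.
Proof.
move=> /forall_inP indI; have disI : [disjoint I & @ordS r @: I].
  rewrite -setI_eq0; apply/set0Pn=> -[j]; rewrite inE => /andP[jI /imsetP[i iI ji]].
  by move: (indI i iI); rewrite -ji jI.
have := max_card (I :|: @ordS r @: I); rewrite cardsU (disjoint_setI0 disI) cards0 subn0.
by rewrite card_imset ?card_ord ?mul2n ?addnn //; apply: ordS_inj.
Qed.

Lemma card_cycle_dominating (D : {set 'I_r}) : dominating Cy D -> r <= 3 * #|D|.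
Proof.
move=> /cycle_dominatingP domD.
have cover : [set: 'I_r] \subset D :|: @ord_pred r @: D :|: @ordS r @: D.
  apply/subsetP=> v _; rewrite !inE; case: (boolP (v \in D)) => //= vD.
  case/orP: (domD v vD) => [SvD|PvD]; apply/orP; [left | right]; apply/imsetP.
    by exists (ordS v); rewrite ?ordSK.
  by exists (ord_pred v); rewrite ?ord_predK.
rewrite -{1}(card_ord r) -cardsT; apply: leq_trans (subset_leq_card cover) _.
apply: leq_trans (leq_card_setU _ _) _; rewrite mulSn mul2n -addnn addnA.
apply: leq_add (leq_imset_card _ _); apply: leq_trans (leq_card_setU _ _) _.
exact: leq_add (leq_imset_card _ _).
Qed.

Definition thirds : {set 'I_r} := [set i : 'I_r | 3 %| i].

Lemma thirds_dominating : dominating Cy thirds.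
Proof.
apply/cycle_dominatingP=> v; rewrite !inE /= => v3; have ltvr := ltn_ord v.
case: (ltnP v.+1 r) => [ltSvr|leSvr]; last first.
  have -> : v.+1 = r by lia.
  by rewrite modnn.
rewrite modn_small //; case: (boolP (3 %| v.+1)) => //= Sv3.
have -> : (v + r).-1 = v.-1 + r by lia.
by rewrite modnDr modn_small; lia.
Qed.

Lemma card_thirds : #|thirds| <= (r + 2) %/ 3.
Proof.
pose toI k : 'I_r := Ordinal (ltn_pmod k r_gt0).
have sub : thirds \subset [set toI (3 * k) | k : 'I_((r + 2) %/ 3)].
  apply/subsetP=> i; rewrite inE => i3; have ltir := ltn_ord i.
  have ltk : i %/ 3 < (r + 2) %/ 3 by lia.
  by apply/imsetP; exists (Ordinal ltk) => //; apply: val_inj; rewrite /= modn_small; lia.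
by apply: leq_trans (subset_leq_card sub) _; rewrite (leq_trans (leq_imset_card _ _)) ?card_ord.
Qed.

Lemma cycle_domination_number : domination_number Cy = (r + 2) %/ 3.
Proof.
apply: (bigmin_eq thirds_dominating card_thirds); first by rewrite card_ord; lia.
by move=> D /card_cycle_dominating; move: #|D| => d; lia.
Qed.

Section Wheel.
Local Notation W := (@wheel_adj r).
Local Notation V := (option 'I_r).

Lemma nbhd_rim (i : 'I_r) : nbhd W (Some i) = [set None; Some (ord_pred i); Some (ordS i)].
Proof.
by apply/setP=> -[j|]; rewrite !inE //= cycle_adjE !(inj_eq (@Some_inj _)) orbC.
Qed.

Lemma nbhd_hub : nbhd W None = [set~ None].
Proof. by apply/setP=> -[j|]; rewrite !inE. Qed.

Definition rim (S : {set V}) : {set 'I_r} := [set i | Some i \in S].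

Lemma card_rim (S : {set V}) : #|S| = (None \in S) + #|rim S|.
Proof.
rewrite (cardsD1 None) -[#|rim S|](card_imset _ (@Some_inj _)); congr (_ + _).
apply: eq_card => -[i|]; rewrite !inE ?mem_imset ?inE //; last by apply/esym/imsetP=> -[].
exact: Some_inj.
Qed.

Lemma fort_hubless_consecutive (F : {set V}) a : fort W F -> None \notin F ->
  (Some a \in F) || (Some (ordS a) \in F).
Proof.
move=> fortF hubF; apply: contraT; rewrite negb_or => /andP[aF SaF].
have step b : Some b \notin F -> Some (ordS b) \notin F -> Some (ordS (ordS b)) \notin F.
  move=> bF SbF; apply/negP=> SSbF.
  have SSbN : Some (ordS (ordS b)) \in nbhd W (Some (ordS b)) :&: F.
    by rewrite inE nbhd_rim !inE eqxx orbT.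
  have [w] := fort_other_nbr fortF SbF SSbN.
  rewrite inE nbhd_rim ordSK !inE -orbA => /andP[/or3P[]/eqP-> wF]; last by rewrite eqxx.
    by rewrite wF in hubF.
  by rewrite wF in bF.
have out k : Some (iter k (@ordS r) a) \notin F /\ Some (iter k.+1 (@ordS r) a) \notin F.
  by elim: k => [|k [IH1 IH2]] //=; split => //; apply: step.
case/andP: fortF => /set0Pn[[j|] jF] _; last by rewrite jF in hubF.
have ltar := ltn_ord a; have ltjr := ltn_ord j.
have a_to_j : iter (j + r - a) (@ordS r) a = j.
  apply: val_inj; rewrite val_iter_ordS (_ : a + _ = j + r); last by lia.
  by rewrite modnDr modn_small.
by case: (out (j + r - a)); rewrite a_to_j jF.
Qed.

Lemma fort_hub_nbr (F : {set V}) v : fort W F -> None \in F -> Some v \notin F ->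
  (Some (ordS v) \in F) || (Some (ord_pred v) \in F).
Proof.
move=> fortF hubF vF; have hubN : None \in nbhd W (Some v) :&: F by rewrite !inE hubF.
have [w] := fort_other_nbr fortF vF hubN.
by rewrite inE nbhd_rim !inE -orbA => /andP[/or3P[]/eqP-> wF] //; rewrite wF ?orbT.
Qed.

Definition rimC (I : {set 'I_r}) : {set V} :=
  [set y : V | if y is Some i then i \notin I else false].

Definition hub_rim (D : {set 'I_r}) : {set V} :=
  [set y : V | if y is Some i then i \in D else true].

Lemma rimC_fort (I : {set 'I_r}) : cycle_independent I -> fort W (rimC I).
Proof.
move/forall_inP=> indI.
have [a aI] : exists a, a \notin I.
  by case: (boolP (Ordinal r_gt0 \in I)) => [/indI|]; eexists; eassumption.
apply/andP; split; first by apply/set0Pn; exists (Some a); rewrite inE.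
apply/forallP=> -[i|]; apply/implyP; rewrite inE /= ?negbK => iI.
  apply: (@card_neq1 _ _ (Some (ordS i)) (Some (ord_pred i))).
  - by rewrite !inE /= cycle_adjE eqxx indI.
  - rewrite !inE /= cycle_adjE eqxx orbT /=.
    by apply/negP=> /indI; rewrite ord_predK iI.
  - by rewrite (inj_eq (@Some_inj _)) ordS_neq_pred.
rewrite nbhd_hub; case: (boolP (ordS a \in I)) => [/indI SSaI | SaI].
  apply: (@card_neq1 _ _ (Some a) (Some (ordS (ordS a)))); rewrite ?inE //.
  by rewrite (inj_eq (@Some_inj _)) eq_sym ordSS_neq.
apply: (@card_neq1 _ _ (Some a) (Some (ordS a))); rewrite ?inE //.
by rewrite (inj_eq (@Some_inj _)) eq_sym ordS_neq.
Qed.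

Lemma hub_rim_fort (D : {set 'I_r}) : dominating Cy D -> fort W (hub_rim D).
Proof.
move/cycle_dominatingP=> domD; apply/andP; split.
  by apply/set0Pn; exists None; rewrite inE.
apply/forallP=> -[i|]; apply/implyP; rewrite inE //= => iD.
have [u uD u_nbr] : exists2 u, u \in D & Some u \in nbhd W (Some i).
  case/orP: (domD i iD) => [SiD|PiD]; [exists (ordS i) | exists (ord_pred i)] => //;
  by rewrite nbhd_rim !inE eqxx ?orbT.
apply: (@card_neq1 _ _ None (Some u)); rewrite ?inE ?nbhd_rim //.
by rewrite inE in u_nbr; rewrite u_nbr.
Qed.

Definition spoke_triple (a : 'I_r) : {set V} := [set None; Some a; Some (ordS a)].

Definition rim_triple (v : 'I_r) : {set V} := [set Some (ord_pred v); Some v; Some (ordS v)].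

Lemma card_spoke_triple a : #|spoke_triple a| = 3.
Proof. by rewrite cards3 // (inj_eq (@Some_inj _)) eq_sym ordS_neq. Qed.

Lemma card_rim_triple v : #|rim_triple v| = 3.
Proof.
by rewrite cards3 // !(inj_eq (@Some_inj _)) ?ord_pred_neq 1?eq_sym ?ordS_neq_pred ?ordS_neq.
Qed.

Lemma zf_spoke_triple a : zero_forcing_set W (spoke_triple a).
Proof.
apply/zero_forcing_setP=> F fortF; rewrite -setI_eq0; apply/set0Pn.
case: (boolP (None \in F)) => [hubF | /(fort_hubless_consecutive a fortF)/orP[] aF].
- by exists None; rewrite !inE eqxx.
- by exists (Some a); rewrite !inE eqxx orbT.
- by exists (Some (ordS a)); rewrite !inE eqxx !orbT.
Qed.

Lemma zf_rim_triple v : zero_forcing_set W (rim_triple v).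
Proof.
apply/zero_forcing_setP=> F fortF; rewrite -setI_eq0; apply/set0Pn.
case: (boolP (Some v \in F)) => [vF|vF]; first by exists (Some v); rewrite !inE eqxx orbT.
case: (boolP (None \in F)) => [hubF | /(fort_hubless_consecutive v fortF)].
  case/orP: (fort_hub_nbr fortF hubF vF) => [SvF|PvF].
    by exists (Some (ordS v)); rewrite !inE eqxx !orbT.
  by exists (Some (ord_pred v)); rewrite !inE eqxx.
by rewrite (negbTE vF) => SvF; exists (Some (ordS v)); rewrite !inE eqxx !orbT.
Qed.

Lemma zf_sub_triple (B : {set V}) : zero_forcing_set W B ->
  exists T : {set V}, [/\ T \subset B, #|T| = 3 & zero_forcing_set W T].
Proof.
move/zero_forcing_setP=> zfB; case: (boolP (None \in B)) => hubB.
  have [a /andP[aB SaB]] : exists a, (a \in rim B) && (ordS a \in rim B).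
    apply/existsP; apply: contraT => /existsPn noa.
    have indB : cycle_independent (rim B).
      by apply/forall_inP=> i iB; move: (noa i); rewrite iB.
    case/negP: (zfB _ (rimC_fort indB)); rewrite disjoints_subset.
    by apply/subsetP=> -[i|] iB; rewrite !inE //= iB.
  exists (spoke_triple a); split; rewrite ?card_spoke_triple ?zf_spoke_triple //.
  by rewrite !inE in aB SaB; apply/subsetP=> y; rewrite !inE -orbA => /or3P[]/eqP->.
have [v vB] : exists v, cnbhd v \subset rim B.
  apply/existsP; apply: contraT => /existsPn novB.
  case/negP: (zfB _ (hub_rim_fort (dominating_setC novB))); rewrite disjoints_subset.
  apply/subsetP=> -[i|] iB; rewrite !inE /=; [by rewrite iB | by rewrite iB in hubB].
exists (rim_triple v); split; rewrite ?card_rim_triple ?zf_rim_triple //.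
have inB i : i \in cnbhd v -> Some i \in B by move/(subsetP vB); rewrite inE.
by apply/subsetP=> y; rewrite !inE -orbA => /or3P[]/eqP->; apply: inB; rewrite !inE eqxx ?orbT.
Qed.

Lemma Zf_wheel : Zf W = 3.
Proof.
apply: (bigmin_eq (zf_spoke_triple (Ordinal r_gt0))); rewrite ?card_spoke_triple //.
  by rewrite card_option card_ord ltnW.
by move=> B /zf_sub_triple[T [TB <- _]]; apply: subset_leq_card.
Qed.

Lemma minset_spoke_triple a : minset (zero_forcing_set W) (spoke_triple a).
Proof.
apply/minsetP; split=> [|B zfB BT]; first exact: zf_spoke_triple.
have [T [TB cardT _]] := zf_sub_triple zfB.
apply/eqP; rewrite eqEcard BT card_spoke_triple -cardT.
exact: subset_leq_card.
Qed.

Lemma Zbar_wheel : Zbar W = 3.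
Proof.
apply: (bigmax_eq (minset_spoke_triple (Ordinal r_gt0))); rewrite ?card_spoke_triple //.
move=> B minB; have [T [TB <- zfT]] := zf_sub_triple (minsetp minB).
by rewrite (minsetinf minB zfT TB).
Qed.

Lemma ZIr_spoke_pair a b : a != b -> ZIr_set W [set None; Some a; Some b].
Proof.
move=> ab; apply/ZIr_setP=> x; rewrite !inE -orbA => /or3P[]/eqP->.
- exists (hub_rim (~: [set a; b])).
    apply/hub_rim_fort/dominating_setC => v; apply: contraTN isT => /subset_leq_card.
    by rewrite card_cnbhd cards2; case: (_ != _).
  by move=> y; rewrite !inE -orbA => /or3P[]/eqP->; rewrite ?inE ?eqxx ?orbT.
- exists (rimC [set b]); first exact/rimC_fort/cycle_independent1.
  move=> y; rewrite !inE -orbA => /or3P[]/eqP->; rewrite ?inE ?eqxx //=.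
  by rewrite (inj_eq (@Some_inj _)) eq_sym (negbTE ab).
- exists (rimC [set a]); first exact/rimC_fort/cycle_independent1.
  move=> y; rewrite !inE -orbA => /or3P[]/eqP->; rewrite ?inE ?eqxx //=.
    by rewrite (inj_eq (@Some_inj _)) (negbTE ab).
  by rewrite eq_sym.
Qed.

Lemma maxset_spoke_triple a : maxset (ZIr_set W) (spoke_triple a).
Proof.
apply/maxsetP; split=> [|B /ZIr_setP privB TB].
  by apply: ZIr_spoke_pair; rewrite eq_sym ordS_neq.
apply/eqP; rewrite eqEsubset TB andbT; apply/subsetP=> x xB; apply: contraT => xT.
have [F fortF privF] := privB x xB.
have notF y : y \in spoke_triple a -> y \notin F.
  by move=> yT; rewrite privF ?(subsetP TB) //; apply: contraNneq xT => <-.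
have hubF : None \notin F by apply: notF; rewrite !inE eqxx.
have aF : Some a \notin F by apply: notF; rewrite !inE eqxx orbT.
have SaF : Some (ordS a) \notin F by apply: notF; rewrite !inE eqxx !orbT.
by move: (fort_hubless_consecutive a fortF hubF); rewrite (negbTE aF) (negbTE SaF).
Qed.

Lemma maxset_ZIr_card (S : {set V}) : maxset (ZIr_set W) S -> 3 <= #|S|.
Proof.
move=> maxS; rewrite leqNgt; apply/negP=> smallS.
have [a [b [ab rimSab]]] : exists a b, a != b /\ rim S \subset [set a; b].
  apply: subset_pair; first by rewrite card_ord ltnW.
  by rewrite card_rim in smallS; lia.
have S_sub : S \subset [set None; Some a; Some b].
  apply/subsetP=> -[i|] iS; rewrite !inE //= !(inj_eq (@Some_inj _)).
  by rewrite -in_set2; apply: (subsetP rimSab); rewrite inE.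
move: smallS; rewrite -(maxsetsup maxS (ZIr_spoke_pair ab) S_sub).
by rewrite cards3 // (inj_eq (@Some_inj _)).
Qed.

Section PrivateFort.
Variables (S F : {set V}) (x : V).
Hypotheses (fortF : fort W F) (privF : forall y, y \in S -> (y \in F) = (y == x)).

Lemma private_fort_consecutive i : None \notin F ->
  i \in rim S -> ordS i \in rim S -> (x == Some i) || (x == Some (ordS i)).
Proof.
rewrite !inE => hubF iS SiS; rewrite ![x == _]eq_sym -(privF iS) -(privF SiS).
exact: fort_hubless_consecutive.
Qed.

Lemma private_fort_cnbhd v : cnbhd v \subset rim S -> x \in rim_triple v.
Proof.
move=> /subsetP vS; have [PvS vS' SvS] : [/\ ord_pred v \in rim S, v \in rim S & ordS v \in rim S].
  by split; apply: vS; rewrite !inE eqxx ?orbT.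
case: (boolP (None \in F)) => [hubF|hubF]; last first.
  by case/orP: (private_fort_consecutive hubF vS' SvS) => /eqP->; rewrite !inE eqxx ?orbT.
rewrite !inE in PvS vS' SvS; case: (boolP (Some v \in F)) => [|vF].
  by rewrite privF // => /eqP<-; rewrite !inE eqxx orbT.
by case/orP: (fort_hub_nbr fortF hubF vF); rewrite privF // => /eqP<-; rewrite !inE eqxx ?orbT.
Qed.

End PrivateFort.

Lemma ZIr_hub_independent (S : {set V}) : ZIr_set W S -> None \in S -> 3 < #|S| ->
  cycle_independent (rim S).
Proof.
move=> /ZIr_setP privS hubS bigS; apply/forall_inP=> i iS; apply/negP=> SiS.
have [x] : exists x, x \in S :\: spoke_triple i.
  apply/set0Pn; apply: contraTneq bigS => /eqP; rewrite setD_eq0 => /subset_leq_card.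
  by rewrite card_spoke_triple leqNgt.
case/setDP=> xS xT; have [F fortF privF] := privS x xS.
have hubF : None \notin F.
  by rewrite privF // eq_sym; apply: contraNneq xT => ->; rewrite !inE eqxx.
move: xT; case/orP: (private_fort_consecutive fortF privF hubF iS SiS) => /eqP->;
by rewrite !inE eqxx ?orbT.
Qed.

Lemma ZIr_card_le (S : {set V}) : 5 <= r -> ZIr_set W S -> #|S| <= r - (r + 2) %/ 3.
Proof.
move=> r_ge5 zS; have /ZIr_setP privS := zS; have le3 : 3 <= r - (r + 2) %/ 3 by lia.
case: (boolP (None \in S)) => [hubS|hubS].
  case: (leqP #|S| 3) => [small|big]; first exact: leq_trans small le3.
  move: (card_cycle_independent (ZIr_hub_independent zS hubS big)).
  by rewrite (card_rim S) hubS; move: #|rim S| => n; lia.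
case: (boolP [exists v, cnbhd v \subset rim S]) => [/existsP[v vS]|/existsPn noS].
  apply: leq_trans le3; rewrite -(card_rim_triple v); apply/subset_leq_card/subsetP=> x xS.
  by have [F fortF privF] := privS x xS; apply: private_fort_cnbhd fortF privF v vS.
have := domination_number_le (dominating_setC noS); have := cardsC (rim S).
rewrite cycle_domination_number card_ord (card_rim S) (negbTE hubS).
by move: #|rim S| #|~: rim S| => n m; lia.
Qed.

Lemma ZIr_rimC (D : {set 'I_r}) : dominating Cy D -> ZIr_set W (rimC D).
Proof.
move/cycle_dominatingP=> domD; apply/ZIr_setP=> -[i|]; rewrite inE //= => iD.
exists (hub_rim (i |: D)).
  apply/hub_rim_fort/cycle_dominatingP=> v; rewrite !inE negb_or => /andP[_ vD].
  by case/orP: (domD v vD) => ->; rewrite ?orbT.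
move=> [j|]; rewrite !inE //= => jD.
by rewrite (negbTE jD) orbF (inj_eq (@Some_inj _)).
Qed.

Lemma card_rimC (D : {set 'I_r}) : #|rimC D| = r - #|D|.
Proof.
rewrite card_rim (_ : rim _ = ~: D); last by apply/setP=> i; rewrite !inE.
by have := cardsC D; rewrite inE add0n card_ord; move: #|D| #|~: D| => m n; lia.
Qed.

Lemma ZIR_wheel : 5 <= r -> ZIR W = r - domination_number Cy.
Proof.
move=> r_ge5; rewrite cycle_domination_number.
have [S maxS rimC_S] := maxset_exists (ZIr_rimC thirds_dominating).
apply: (bigmax_eq maxS) => [|T /maxsetp]; last exact: ZIr_card_le.
apply: leq_trans (subset_leq_card rimC_S); rewrite card_rimC.
by have := card_thirds; lia.
Qed.

Lemma zir_wheel : zir W = 3.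
Proof.
apply: (bigmin_eq (maxset_spoke_triple (Ordinal r_gt0))); rewrite ?card_spoke_triple //.
  by rewrite card_option card_ord ltnW.
exact: maxset_ZIr_card.
Qed.

End Wheel.

End Cycle.

Theorem proposition6p4 (r : nat) (hr : 5 <= r) :
  [/\ ZIR (@wheel_adj r) = r - domination_number (@cycle_adj r),
      r - domination_number (@cycle_adj r) = r - (r + 2) %/ 3,
      zir (@wheel_adj r) = 3,
      Zf (@wheel_adj r) = 3
    & Zbar (@wheel_adj r) = 3].
Proof.
have r_gt2 : 2 < r by apply: leq_trans hr.
split; rewrite ?ZIR_wheel ?cycle_domination_number ?zir_wheel ?Zf_wheel ?Zbar_wheel //.
Qed.
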